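(* Let $\lambda\in k^*$, $E,P\in GL_m(k)$ and $F,Q\in GL_n(k)$. Then $H(\lambda E,\lambda F)=H(E,F)$, and there are algebra isomorphisms $H(E,F)\cong H(PEP^{-1},QFQ^{-1})$ and $H(E,F)\cong H({}^tE^{-1},{}^tF^{-1})$.
   Context: $k$ is a field. For $E\in GL_m(k)$, $F\in GL_n(k)$, $H(E,F)$ is the universal algebra with generators $u_{ij},v_{ij}$, $1\le i\le m$, $1\le j\le n$, and relations $u\,{}^tv=I_m=v\,F\,{}^tu\,E^{-1}$ and ${}^tv\,u=I_n=F\,{}^tu\,E^{-1}v$, where $u=(u_{ij})$, $v=(v_{ij})$. *)

(* The free associative k-algebra is modelled with the
   monoid algebra {malg k[{fmonom X}]} of the free monoid on X (multinomials). *)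
From HB Require Import structures.
From mathcomp Require Import all_boot all_order all_algebra.
From mathcomp Require Import monalg.

Set Implicit Arguments.
Unset Strict Implicit.
Unset Printing Implicit Defensive.

Import GRing.Theory.
Local Open Scope ring_scope.

(* generators: inl (i,j) = u_ij, inr (i,j) = v_ij *)
Definition Hgen (m n : nat) : finType := (('I_m * 'I_n) + ('I_m * 'I_n))%type.

Definition FreeAlg (k : fieldType) (m n : nat) := {malg k[{fmonom (Hgen m n)}]}.

Definition gen (k : fieldType) (m n : nat) (x : Hgen m n) : FreeAlg k m n :=
  << fmu x >>.

Definition Umx (k : fieldType) (m n : nat) : 'M[FreeAlg k m n]_(m, n) :=
  \matrix_(i, j) gen k (inl (i, j)).
Definition Vmx (k : fieldType) (m n : nat) : 'M[FreeAlg k m n]_(m, n) :=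
  \matrix_(i, j) gen k (inr (i, j)).

Definition cmx (k : fieldType) (m n p q : nat) (M : 'M[k]_(p, q))
  : 'M[FreeAlg k m n]_(p, q) := map_mx (fun c => c%:MP) M.

Definition Hrel (k : fieldType) (m n : nat) (E : 'M[k]_m) (F : 'M[k]_n)
    (r : FreeAlg k m n) : Prop :=
  let u := Umx k m n in let v := Vmx k m n in
  let E' := cmx m n (invmx E) in let F' := cmx m n F in
  (exists i j : 'I_m, r = (u *m v^T - 1%:M) i j) \/
  (exists i j : 'I_m, r = (v *m F' *m u^T *m E' - 1%:M) i j) \/
  (exists i j : 'I_n, r = (v^T *m u - 1%:M) i j) \/
  (exists i j : 'I_n, r = (F' *m u^T *m E' *m v - 1%:M) i j).

Definition is_ideal (A : ringType) (J : A -> Prop) : Prop :=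
  J 0 /\ (forall x y, J x -> J y -> J (x + y)) /\
  (forall a x b, J x -> J (a * x * b)).

Definition gen_ideal (A : ringType) (S : A -> Prop) (x : A) : Prop :=
  forall J : A -> Prop, is_ideal J -> (forall s, S s -> J s) -> J x.

(* the defining ideal of H(E,F) = FreeAlg / Hideal E F *)
Definition Hideal (k : fieldType) (m n : nat) (E : 'M[k]_m) (F : 'M[k]_n) :=
  gen_ideal (@Hrel k m n E F).

(* A/I and B/J are isomorphic as (unital) k-algebras: written out as a pair of
   k-algebra morphisms between the free algebras that descend to the quotients
   and induce mutually inverse maps there. *)
Definition quot_alg_iso (k : fieldType) (A B : lalgType k)
    (I : A -> Prop) (J : B -> Prop) : Prop :=
  exists (f : {lrmorphism A -> B}) (g : {lrmorphism B -> A}),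
    (forall x, I x -> J (f x)) /\ (forall y, J y -> I (g y)) /\
    (forall x, I (g (f x) - x)) /\ (forall y, J (f (g y) - y)).

Definition H_iso (k : fieldType) (m n : nat)
    (E E' : 'M[k]_m) (F F' : 'M[k]_n) : Prop :=
  quot_alg_iso (Hideal E F) (Hideal E' F').

(* The four defining relations of H(E,F) say that v^T is a two-sided inverse
   of u and that F u^T E^-1 is a two-sided inverse of v.  Both properties
   survive multiplication on either side by invertible matrices with entries
   in k, and such matrices behave like scalars under transposition because k
   is central.  Hence the substitutions u |-> P^T u (Q^-1)^T, v |-> P^-1 v Q
   and u |-> v, v |-> E u F^-1 of the free algebra send the relations of
   H(E,F) into the ideals of H(P E P^-1, Q F Q^-1) and H((E^T)^-1, (F^T)^-1);
   the substitutions in the opposite direction undo them on the generators,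
   so they induce mutually inverse isomorphisms.  Scaling E and F by the
   central lambda leaves F u^T E^-1 unchanged. *)

From HB Require Import structures.
From mathcomp Require Import all_boot all_order all_algebra.
From mathcomp Require Import monalg.

Set Implicit Arguments.
Unset Strict Implicit.
Unset Printing Implicit Defensive.

Import GRing.Theory.
Local Open Scope ring_scope.

Section Ideals.
Variable R : nzRingType.
Implicit Types (J S : R -> Prop).

Lemma gen_ideal_is_ideal S : is_ideal (gen_ideal S).
Proof.
split; first by move=> J [].
split=> [x y Sx Sy | a x b Sx] J idJ SJ; have [_ [JD JM]] := idJ.
  by apply: JD; [apply: Sx | apply: Sy].
by apply: JM; apply: Sx.
Qed.

Lemma mem_gen_ideal S s : S s -> gen_ideal S s.
Proof. by move=> Ss J _; apply. Qed.

Lemma gen_ideal_rmorph (R' : nzRingType) (f : {rmorphism R -> R'}) S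
    (J : R' -> Prop) :
  is_ideal J -> (forall s, S s -> J (f s)) -> forall x, gen_ideal S x -> J (f x).
Proof.
move=> [J0 [JD JM]] SJ x Sx; apply: (Sx (fun y => J (f y))) => //.
split; first by rewrite rmorph0.
split=> [y z Jy Jz | a y b Jy]; first by rewrite rmorphD; apply: JD.
by rewrite !rmorphM; apply: JM.
Qed.

Lemma ideal_sum J (I : Type) (r : seq I) (F : I -> R) :
  is_ideal J -> (forall i, J (F i)) -> J (\sum_(i <- r) F i).
Proof.
move=> [J0 [JD _]] JF; elim: r => [|i r IHr]; first by rewrite big_nil.
by rewrite big_cons; apply: JD.
Qed.

Definition eqmodmx J p q (X Y : 'M[R]_(p, q)) : Prop :=
  forall i j, J ((X - Y) i j).

Lemma eqmodmx_mul J p q r s (L : 'M[R]_(p, q)) (X Y : 'M[R]_(q, r))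
    (M : 'M[R]_(r, s)) :
  is_ideal J -> eqmodmx J X Y -> eqmodmx J (L *m X *m M) (L *m Y *m M).
Proof.
move=> idJ JXY i j; rewrite -mulmxBl -mulmxBr mxE.
apply: ideal_sum => // l; rewrite mxE mulr_suml.
apply: ideal_sum => // l'; have [_ [_ JM]] := idJ.
exact: JM.
Qed.

Lemma eqmodmx1_conj J p q (L : 'M[R]_(p, q)) (X : 'M[R]_q) (M : 'M[R]_(q, p)) :
  is_ideal J -> L *m M = 1%:M -> eqmodmx J X 1%:M ->
  eqmodmx J (L *m X *m M) 1%:M.
Proof.
by move=> idJ LM JX; have := eqmodmx_mul L M idJ JX; rewrite mulmx1 LM.
Qed.

Definition mxinv_mod J p q (X : 'M[R]_(p, q)) (Y : 'M[R]_(q, p)) : Prop :=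
  eqmodmx J (X *m Y) 1%:M /\ eqmodmx J (Y *m X) 1%:M.

Lemma mxinv_mod_conj J p q p' q' (X : 'M[R]_(p, q)) (Y : 'M[R]_(q, p))
    (L : 'M[R]_(p', p)) (L' : 'M[R]_(p, p')) (M : 'M[R]_(q, q'))
    (M' : 'M[R]_(q', q)) :
  is_ideal J -> L *m L' = 1%:M -> L' *m L = 1%:M ->
  M *m M' = 1%:M -> M' *m M = 1%:M ->
  mxinv_mod J X Y -> mxinv_mod J (L *m X *m M) (M' *m Y *m L').
Proof.
move=> idJ LL' L'L MM' M'M [XY YX]; split.
  rewrite !mulmxA -(mulmxA (L *m X)) MM' mulmx1 -(mulmxA L).
  exact: eqmodmx1_conj.
rewrite !mulmxA -(mulmxA (M' *m Y)) L'L mulmx1 -(mulmxA M').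
exact: eqmodmx1_conj.
Qed.

End Ideals.

Lemma invmx_conj (R : comUnitRingType) p (P M : 'M[R]_p) :
  P \in unitmx -> invmx (P *m M *m invmx P) = P *m invmx M *m invmx P.
Proof.
move=> Pu; have [Mu | Mnu] := boolP (M \in unitmx); last first.
  have PMPnu : P *m M *m invmx P \notin unitmx.
    by rewrite !unitmx_mul unitmx_inv Pu (negbTE Mnu).
  by rewrite (invmx_out PMPnu) (invmx_out Mnu).
have inv : (P *m M *m invmx P) *m (P *m invmx M *m invmx P) = 1%:M.
  by rewrite !mulmxA mulmxKV // mulmxK // mulmxV.
by rewrite -(mulmx1 (invmx (P *m M *m invmx P))) -inv mulKmx // !unitmx_mul
  unitmx_inv Pu Mu.
Qed.

Section CentralScalars.
Variables (k : fieldType) (R : nzRingType) (s : {rmorphism k -> R}).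
Hypothesis s_central : forall (a : k) (x : R), GRing.comm x (s a).
Local Notation c := (map_mx s).

Lemma trmx_cmxl p q r (M : 'M[k]_(p, q)) (Y : 'M[R]_(q, r)) :
  (c M *m Y)^T = Y^T *m c M^T.
Proof.
by apply/matrixP => i j; rewrite !mxE; apply: eq_bigr => l _; rewrite !mxE s_central.
Qed.

Lemma trmx_cmxr p q r (Y : 'M[R]_(p, q)) (M : 'M[k]_(q, r)) :
  (Y *m c M)^T = c M^T *m Y^T.
Proof.
by apply/matrixP => i j; rewrite !mxE; apply: eq_bigr => l _; rewrite !mxE s_central.
Qed.

Lemma trmx_csandwich p q r t (M : 'M[k]_(p, q)) (Y : 'M[R]_(q, r))
    (N : 'M[k]_(r, t)) :
  (c M *m Y *m c N)^T = c N^T *m Y^T *m c M^T.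
Proof. by rewrite trmx_cmxr trmx_cmxl mulmxA. Qed.

Lemma csandwichA p p' q q' r t (M : 'M[k]_(p, p')) (M' : 'M[k]_(p', q))
    (Y : 'M[R]_(q, r)) (N' : 'M[k]_(r, q')) (N : 'M[k]_(q', t)) :
  c M *m (c M' *m Y *m c N') *m c N = c (M *m M') *m Y *m c (N' *m N).
Proof. by rewrite !map_mxM !mulmxA. Qed.

Lemma csandwichK p q (M M' : 'M[k]_p) (N N' : 'M[k]_q) (Y : 'M[R]_(p, q)) :
  M *m M' = 1%:M -> N' *m N = 1%:M -> c M *m (c M' *m Y *m c N') *m c N = Y.
Proof. by move=> MM' N'N; rewrite csandwichA MM' N'N !map_mx1 mul1mx mulmx1. Qed.

Lemma cmx_scalar_comm (a : k) p q (Y : 'M[R]_(p, q)) :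
  c a%:M *m Y = Y *m c a%:M.
Proof.
rewrite !map_scalar_mx -!diag_const_mx mul_diag_mx mul_mx_diag.
by apply/matrixP => i j; rewrite !mxE s_central.
Qed.

Lemma mxinv_mod_cconj (J : R -> Prop) p q (M : 'M[k]_p) (N : 'M[k]_q) X Y :
  is_ideal J -> M \in unitmx -> N \in unitmx -> mxinv_mod J X Y ->
  mxinv_mod J (c M *m X *m c N) (c (invmx N) *m Y *m c (invmx M)).
Proof.
move=> idJ Mu Nu; apply: mxinv_mod_conj => //;
  by rewrite -map_mxM (mulmxV, mulVmx) // map_mx1.
Qed.

Variables m n : nat.

Definition Hrels (J : R -> Prop) (E : 'M[k]_m) (F : 'M[k]_n) (U V : 'M[R]_(m, n)) :=
  mxinv_mod J U V^T /\ mxinv_mod J V (c F *m U^T *m c (invmx E)).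

Lemma Hrels_scale (J : R -> Prop) (a : k) E F U V :
  a != 0 -> E \in unitmx -> Hrels J (a *: E) (a *: F) U V <-> Hrels J E F U V.
Proof.
move=> a0 Eu; suff scaleW : c (a *: F) *m U^T *m c (invmx (a *: E)) =
    c F *m U^T *m c (invmx E) by rewrite /Hrels scaleW.
rewrite invmxZ ?unitmxZ ?unitfE // -mul_mx_scalar -mul_scalar_mx !map_mxM.
rewrite -(mulmxA (c F)) cmx_scalar_comm -!mulmxA (mulmxA (c a%:M)) -map_mxM.
by rewrite -scalar_mxM mulfV // map_mx1 mul1mx.
Qed.

Lemma Hrels_conj (J : R -> Prop) (P : 'M[k]_m) (Q : 'M[k]_n) E F U V :
  is_ideal J -> P \in unitmx -> Q \in unitmx ->
  Hrels J (P *m E *m invmx P) (Q *m F *m invmx Q) U V ->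
  Hrels J E F (c P^T *m U *m c (invmx Q)^T) (c (invmx P) *m V *m c Q).
Proof.
move=> idJ Pu Qu [UV VW]; split.
  have PTu : P^T \in unitmx by rewrite unitmx_tr.
  have QiTu : (invmx Q)^T \in unitmx by rewrite unitmx_tr unitmx_inv.
  have := mxinv_mod_cconj idJ PTu QiTu UV.
  by rewrite trmx_csandwich !trmx_inv invmxK.
have Piu : invmx P \in unitmx by rewrite unitmx_inv.
have eF : invmx Q *m (Q *m F *m invmx Q) = F *m invmx Q by rewrite -mulmxA mulKmx.
have eE : invmx (P *m E *m invmx P) *m P = P *m invmx E.
  by rewrite invmx_conj // mulmxKV.
have := mxinv_mod_cconj idJ Piu Qu VW.
by rewrite trmx_csandwich !trmxK invmxK !csandwichA eF eE.
Qed.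

Lemma Hrels_conj_rev (J : R -> Prop) (P : 'M[k]_m) (Q : 'M[k]_n) E F U V :
  is_ideal J -> P \in unitmx -> Q \in unitmx -> Hrels J E F U V ->
  Hrels J (P *m E *m invmx P) (Q *m F *m invmx Q)
    (c (invmx P)^T *m U *m c Q^T) (c P *m V *m c (invmx Q)).
Proof.
move=> idJ Pu Qu rel.
have Piu : invmx P \in unitmx by rewrite unitmx_inv.
have Qiu : invmx Q \in unitmx by rewrite unitmx_inv.
have conjK p (M N : 'M[k]_p) :
    M \in unitmx -> invmx M *m (M *m N *m invmx M) *m invmx (invmx M) = N.
  by move=> Mu; rewrite invmxK !mulmxA mulmxKV // mulVmx // mul1mx.
have := Hrels_conj (E := P *m E *m invmx P) (F := Q *m F *m invmx Q) idJ Piu Qiu.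
by rewrite !conjK // !invmxK; apply.
Qed.

Lemma Hrels_inv_tr (J : R -> Prop) E F U V :
  is_ideal J -> E \in unitmx -> F \in unitmx ->
  Hrels J (invmx E^T) (invmx F^T) U V -> Hrels J E F V (c E *m U *m c (invmx F)).
Proof.
move=> idJ Eu Fu [UV VW]; split.
  by move: VW; rewrite trmx_csandwich trmx_inv invmxK.
have Fiu : invmx F \in unitmx by rewrite unitmx_inv.
by have := mxinv_mod_cconj idJ Eu Fiu UV; rewrite invmxK.
Qed.

Lemma Hrels_inv_tr_rev (J : R -> Prop) E F U V :
  is_ideal J -> E \in unitmx -> F \in unitmx ->
  Hrels J E F U V -> Hrels J (invmx E^T) (invmx F^T) (c (invmx E) *m V *m c F) U.
Proof.
move=> idJ Eu Fu [UV VW]; split.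
  have Eiu : invmx E \in unitmx by rewrite unitmx_inv.
  have := mxinv_mod_cconj idJ Eiu Fu VW.
  by rewrite invmxK csandwichK ?mulVmx ?mulmxV.
rewrite trmx_csandwich invmxK csandwichK //.
  by rewrite mulVmx // unitmx_tr.
by rewrite -trmx_mul mulmxV // trmx1.
Qed.

End CentralScalars.

Section FreeAlgebra.
Variables (k : fieldType) (m n : nat).
Local Notation A := (FreeAlg k m n).
Local Notation X := (Hgen m n).
Local Notation sA := (malgC : {rmorphism k -> A}).
Local Notation c := (map_mx sA).
Local Notation u := (Umx k m n).
Local Notation v := (Vmx k m n).

Lemma malgC_central (a : k) (g : A) : GRing.comm g (sA a).
Proof.
rewrite /GRing.comm mul_malgC malgM_def fgmulgU malgZ_def /fgscale.
by apply: eq_bigr => w _; rewrite mulm1 mulrC.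
Qed.

Lemma malgU_prod (s : seq X) : << FMonom s >> = \prod_(x <- s) gen k x :> A.
Proof.
elim: s => [|x s IHs]; first by rewrite big_nil -fmoneE.
rewrite big_cons -IHs /gen malgM_def fgmulUU mulr1.
by congr << _ >>; apply/eqP; rewrite fmP fmM fmU.
Qed.

Lemma lrmorph_malgUZ (B : lalgType k) (f : {lrmorphism A -> B}) a w :
  f << a *g w >> = a *: f << w >>.
Proof.
have -> : << a *g w >> = a *: (<< w >> : A).
  by rewrite -mul_malgC malgM_def fgmulUU mulr1 mul1m.
exact: linearZ_LR.
Qed.

Lemma lrmorph_eq_gen (B : lalgType k) (f g : {lrmorphism A -> B}) :
  (forall x, f (gen k x) = g (gen k x)) -> f =1 g.
Proof.
move=> fg y; rewrite (monalgE y) !raddf_sum; apply: eq_bigr => -[s] _.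
set a := y@_ _; transitivity (a *: f << FMonom s >>); first exact: lrmorph_malgUZ.
transitivity (a *: g << FMonom s >>); last by symmetry; exact: lrmorph_malgUZ.
rewrite malgU_prod !rmorph_prod; congr (_ *: _).
by apply: eq_bigr => x _; apply: fg.
Qed.

Section Subst.
Variable phi : X -> A.

Definition subst_monom (w : {fmonom X}) : A := \prod_(x <- w) phi x.

Lemma subst_monom_is_mmorphism : mmorphism subst_monom.
Proof.
by split=> [w w'|]; rewrite /subst_monom ?fmM ?big_cat // fm1 big_nil.
Qed.

HB.instance Definition _ := isMultiplicative.Build {fmonom X} A subst_monom
  subst_monom_is_mmorphism.

Definition subst_fun : A -> A := mmap sA subst_monom.

Lemma subst_is_nmod_morphism : nmod_morphism subst_fun.
Proof. by split=> [|x y]; rewrite /subst_fun (mmap0, mmapD). Qed.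

Lemma subst_is_monoid_morphism : monoid_morphism subst_fun.
Proof.
have [substM subst1] := @commr_mmap_is_multiplicative _ _ A sA subst_monom
  (fun a w w' => esym (malgC_central _ _)).
by split.
Qed.

Lemma subst_is_scalable : scalable subst_fun.
Proof. by move=> a g; rewrite /subst_fun mmapZ -mul_malgC. Qed.

HB.instance Definition _ := GRing.isNmodMorphism.Build A A subst_fun
  subst_is_nmod_morphism.
HB.instance Definition _ := GRing.isMonoidMorphism.Build A A subst_fun
  subst_is_monoid_morphism.
HB.instance Definition _ := GRing.isScalable.Build k A A *:%R subst_fun
  subst_is_scalable.

Definition subst : {lrmorphism A -> A} := subst_fun.

Lemma subst_gen x : subst (gen k x) = phi x.
Proof. by rewrite /= /subst_fun /gen mmapU /subst_monom fmU big_seq1 mul1r. Qed.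

Lemma subst_malgC a : subst (sA a) = sA a.
Proof. by rewrite /= /subst_fun mmapC. Qed.

End Subst.

Definition substUV (U V : 'M[A]_(m, n)) : {lrmorphism A -> A} :=
  subst (fun x => match x with inl (i, j) => U i j | inr (i, j) => V i j end).

Lemma map_substUV_u U V : map_mx (substUV U V) u = U.
Proof. by apply/matrixP => i j; rewrite !mxE subst_gen. Qed.

Lemma map_substUV_v U V : map_mx (substUV U V) v = V.
Proof. by apply/matrixP => i j; rewrite !mxE subst_gen. Qed.

Lemma map_substUV_cmx U V p q (M : 'M[k]_(p, q)) : map_mx (substUV U V) (c M) = c M.
Proof. by apply/matrixP => i j; rewrite !mxE subst_malgC. Qed.

Lemma map_substUV_csandwich_u U V p q (M : 'M[k]_(p, m)) (N : 'M[k]_(n, q)) :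
  map_mx (substUV U V) (c M *m u *m c N) = c M *m U *m c N.
Proof. by rewrite !map_mxM !map_substUV_cmx map_substUV_u. Qed.

Lemma map_substUV_csandwich_v U V p q (M : 'M[k]_(p, m)) (N : 'M[k]_(n, q)) :
  map_mx (substUV U V) (c M *m v *m c N) = c M *m V *m c N.
Proof. by rewrite !map_mxM !map_substUV_cmx map_substUV_v. Qed.

Lemma Hrels_gen E F : Hrels sA (Hideal E F) E F u v.
Proof.
split; split=> i j; rewrite ?mulmxA; apply: mem_gen_ideal;
  [left | right; right; left | right; left | right; right; right];
  exists i, j; reflexivity.
Qed.

Lemma Hideal_rmorph (J : A -> Prop) E F (f : {rmorphism A -> A}) U V :
  is_ideal J -> (forall p q (M : 'M[k]_(p, q)), map_mx f (c M) = c M) ->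
  map_mx f u = U -> map_mx f v = V -> Hrels sA J E F U V ->
  forall x, Hideal E F x -> J (f x).
Proof.
move=> idJ fc <- <- [[JU JUt] [JV JVt]]; rewrite !mulmxA in JV.
apply: gen_ideal_rmorph => // r; move: JU JV JUt JVt; rewrite /Hrel /=.
(* Generalizing the generator matrices keeps the rewrites below from unfolding them. *)
move: u v => u0 v0 JU JV JUt JVt.
have fE p (Y : 'M[A]_p) i j : f ((Y - 1%:M) i j) = (map_mx f Y - 1%:M) i j.
  by rewrite !mxE rmorphB rmorph_nat.
case=> [[i [j ->]] | [[i [j ->]] | [[i [j ->]] | [i [j ->]]]]];
  rewrite fE !map_mxM -?(map_trmx f u0) -?(map_trmx f v0) ?fc;
  [exact (JU i j) | exact (JV i j) | exact (JUt i j) | exact (JVt i j)].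
Qed.

Lemma Hideal_substUV (J : A -> Prop) E F U V :
  is_ideal J -> Hrels sA J E F U V -> forall x, Hideal E F x -> J (substUV U V x).
Proof.
move=> idJ; exact (Hideal_rmorph idJ (map_substUV_cmx U V) (map_substUV_u U V)
  (map_substUV_v U V)).
Qed.

Lemma substUV_comp_id U0 V0 U1 V1 :
  map_mx (substUV U1 V1) U0 = u -> map_mx (substUV U1 V1) V0 = v ->
  forall y, substUV U1 V1 (substUV U0 V0 y) = y.
Proof.
move=> hU hV; apply: (lrmorph_eq_gen (f := substUV U1 V1 \o substUV U0 V0) (g := idfun)).
move=> [[i j] | [i j]] /=; rewrite subst_gen.
- by move/matrixP/(_ i j): hU; rewrite !mxE.
- by move/matrixP/(_ i j): hV; rewrite !mxE.
Qed.

Lemma H_iso_substUV E E' F F' U0 V0 U1 V1 :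
  Hrels sA (Hideal E' F') E F U0 V0 -> Hrels sA (Hideal E F) E' F' U1 V1 ->
  map_mx (substUV U1 V1) U0 = u -> map_mx (substUV U1 V1) V0 = v ->
  map_mx (substUV U0 V0) U1 = u -> map_mx (substUV U0 V0) V1 = v ->
  H_iso E E' F F'.
Proof.
move=> rel0 rel1 hU0 hV0 hU1 hV1.
have idH := @gen_ideal_is_ideal A.
exists (substUV U0 V0), (substUV U1 V1); split; [|split; [|split]].
- exact (Hideal_substUV (idH _) rel0).
- exact (Hideal_substUV (idH _) rel1).
- by move=> x; rewrite substUV_comp_id // subrr; case: (idH (Hrel E F)).
- by move=> y; rewrite substUV_comp_id // subrr; case: (idH (Hrel E' F')).
Qed.

Lemma Hideal_subset E1 F1 E2 F2 :
  Hrels sA (Hideal E2 F2) E1 F1 u v -> forall x, Hideal E1 F1 x -> Hideal E2 F2 x.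
Proof.
have mapid p q (M : 'M[A]_(p, q)) : map_mx idfun M = M by exact: map_mx_id.
move=> rel x Hx; exact (Hideal_rmorph (f := idfun) (@gen_ideal_is_ideal A _)
  (fun _ _ M => mapid _ _ (c M)) (mapid _ _ u) (mapid _ _ v) rel Hx).
Qed.

Lemma Hideal_scale (a : k) (E : 'M[k]_m) (F : 'M[k]_n) (x : A) :
  a != 0 -> E \in unitmx -> Hideal (a *: E) (a *: F) x <-> Hideal E F x.
Proof.
move=> a0 Eu; have scaleE J := Hrels_scale (s := sA) malgC_central J F u v a0 Eu.
split; apply: Hideal_subset.
  exact (proj2 (scaleE _) (Hrels_gen E F)).
exact (proj1 (scaleE _) (Hrels_gen _ _)).
Qed.

Lemma H_iso_conj (E P : 'M[k]_m) (F Q : 'M[k]_n) : P \in unitmx -> Q \in unitmx ->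
  H_iso E (P *m E *m invmx P) F (Q *m F *m invmx Q).
Proof.
move=> Pu Qu; have idH := @gen_ideal_is_ideal A.
apply: (@H_iso_substUV _ _ _ _ (c P^T *m u *m c (invmx Q)^T) (c (invmx P) *m v *m c Q)
  (c (invmx P)^T *m u *m c Q^T) (c P *m v *m c (invmx Q))).
- exact (Hrels_conj (s := sA) malgC_central (idH _) Pu Qu (Hrels_gen _ _)).
- exact (Hrels_conj_rev (s := sA) malgC_central (idH _) Pu Qu (Hrels_gen _ _)).
all: rewrite (map_substUV_csandwich_u, map_substUV_csandwich_v) csandwichK //.
all: by rewrite -?trmx_mul (mulVmx, mulmxV) ?trmx1.
Qed.

Lemma H_iso_inv_tr (E : 'M[k]_m) (F : 'M[k]_n) : E \in unitmx -> F \in unitmx ->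
  H_iso E (invmx E^T) F (invmx F^T).
Proof.
move=> Eu Fu; have idH := @gen_ideal_is_ideal A.
apply: (@H_iso_substUV _ _ _ _ v (c E *m u *m c (invmx F)) (c (invmx E) *m v *m c F) u).
- exact (Hrels_inv_tr (s := sA) malgC_central (idH _) Eu Fu (Hrels_gen _ _)).
- exact (Hrels_inv_tr_rev (s := sA) malgC_central (idH _) Eu Fu (Hrels_gen _ _)).
- exact: map_substUV_v.
- by rewrite map_substUV_csandwich_u csandwichK // mulmxV.
- by rewrite map_substUV_csandwich_v csandwichK // mulVmx.
- exact: map_substUV_u.
Qed.

End FreeAlgebra.

Theorem proposition4p2 (k : fieldType) (m n : nat) (lambda : k)
    (E P : 'M[k]_m) (F Q : 'M[k]_n) :
  lambda != 0 -> E \in unitmx -> P \in unitmx ->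
  F \in unitmx -> Q \in unitmx ->
  (forall x : FreeAlg k m n,
      Hideal (lambda *: E) (lambda *: F) x <-> Hideal E F x) /\
  H_iso E (P *m E *m invmx P) F (Q *m F *m invmx Q) /\
  H_iso E (invmx E^T) F (invmx F^T).
Proof.
move=> l0 Eu Pu Fu Qu; split; [|split].
- by move=> x; apply: Hideal_scale.
- exact: H_iso_conj.
- exact: H_iso_inv_tr.
Qed.
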